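(* In the setting of the context, assume $u$ and $\hat u=u+v$ are quasidefinite, the functionals $(\beta^{(j)}_m)_x$ are linearly independent (in the sense of the context), and that at least one of $(\operatorname{Ker}^R_\beta)^{\perp^R_u}=\{0_p\}$ or $\mathbb I^{\perp^L_u}=\{0_p\}$ holds. Then for every $n\ge0$ the $Np\times Np$ matrix $M_n:=I_{Np}+\langle\mathcal J^{[0,1]}_{K_n}(x),(\beta)_x\rangle$ is nonsingular, and for every $n\ge1$ $$\hat P^{[1]}_n(x)=P^{[1]}_n(x)-\langle P^{[1]}_n(x),(\beta)_x\rangle\,M_{n-1}^{-1}\,\mathcal J^{[0,1]}_{K_{n-1}}(x),$$ $$(\hat P^{[2]}_n(y))^\top=(P^{[2]}_n(y))^\top-\langle K_{n-1}(x,y),(\beta)_x\rangle\,M_{n-1}^{-1}\,\big(\mathcal J_{P^{[2]}_n}\big)^\top,$$ $$\hat H_n=H_n+\langle P^{[1]}_n(x),(\beta)_x\rangle\,M_{n-1}^{-1}\,\big(\mathcal J_{P^{[2]}_n}\big)^\top .$$ Equivalently, with the quasideterminant $\Theta_*\begin{bmatrix}A&B\\C&D\end{bmatrix}=D-CA^{-1}B$: $\hat P^{[1]}_n(x)=\Theta_*\begin{bmatrix}M_{n-1}&\mathcal J^{[0,1]}_{K_{n-1}}(x)\\ \langle P^{[1]}_n(x),(\beta)_x\rangle&P^{[1]}_n(x)\end{bmatrix}$, $(\hat P^{[2]}_n(y))^\top=\Theta_*\begin{bmatrix}M_{n-1}&(\mathcal J_{P^{[2]}_n})^\top\\ \langle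 K_{n-1}(x,y),(\beta)_x\rangle&(P^{[2]}_n(y))^\top\end{bmatrix}$, $\hat H_n=\Theta_*\begin{bmatrix}M_{n-1}&-(\mathcal J_{P^{[2]}_n})^\top\\ \langle P^{[1]}_n(x),(\beta)_x\rangle&H_n\end{bmatrix}$.
   Context: Fix $p\ge1$; ${}^\top$ is transpose. A matrix of generalized kernels $w_{x,y}$ ($p\times p$ matrix of continuous linear functionals on $\mathbb C[x,y]$) defines $\langle P(x),Q(y)\rangle_w\in\mathbb C^{p\times p}$, $(\langle P,Q\rangle_w)_{i,j}=\sum_{k,l}\langle (w_{x,y})_{k,l},P_{i,k}(x)Q_{j,l}(y)\rangle$. It is quasidefinite if all leading block truncations of its Gram matrix $(\langle I_px^k,I_py^l\rangle_w)_{k,l\ge0}$ are nonsingular; then the unique factorization $G=S_1^{-1}HS_2^{-\top}$ ($S_i$ block lower unitriangular, $H=\operatorname{diag}(H_0,H_1,\dots)$) gives monic biorthogonal families $P^{[i]}_n(x)=\sum_{k\le n}(S_i)_{n,k}x^k$ with $\langle P^{[1]}_n,P^{[2]}_m\rangle_w=\delta_{n,m}H_n$, and Christoffel--Darboux kernels $K_n(x,y)=\sum_{k=0}^n(P^{[2]}_k(y))^\top H_k^{-1}P^{[1]}_k(x)$. Objects for $u$ are unhatted, for $\hat u=u+v$ hatted. When an argument depends on another variable (e.g. $K_{n-1}(x,y)$ in the first slot), the other variable is held fixed as a parameter. Uvarov data: distinct real $x_1,\dots,x_q$, positive integers $\kappa^{(j)}$, $N=\sum_j\kappa^{(j)}$;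 for each $j$ and $0\le m\le\kappa^{(j)}-1$ a $p\times p$ matrix $(\beta^{(j)}_m)_x$ of continuous linear functionals on $\mathbb C[x]$. For such $\beta_x$ and $P\in\mathbb C^{p\times p}[x]$: $(\langle P(x),\beta_x\rangle)_{i,l}=\sum_k\langle(\beta_x)_{k,l},P_{i,k}\rangle$ and $(\langle \beta_x,P(x)\rangle)_{k,j}=\sum_l\langle(\beta_x)_{k,l},P_{l,j}\rangle$. Linear independence means: if $X^{(j)}_m\in\mathbb C^{p\times p}$ satisfy $\sum_{j,m}(\beta^{(j)}_m)_xX^{(j)}_m=0$ (matrix product) then all $X^{(j)}_m=0_p$, and if $\sum_{j,m}Y^{(j)}_m(\beta^{(j)}_m)_x=0$ then all $Y^{(j)}_m=0_p$. The perturbation $v_{x,y}=\sum_{j}\sum_{m}\frac{(-1)^m}{m!}(\beta^{(j)}_m)_x\otimes\delta^{(m)}(y-x_j)$ has form $\langle P(x),Q(y)\rangle_v=\sum_{j=1}^q\sum_{m=0}^{\kappa^{(j)}-1}\frac1{m!}\langle P(x),(\beta^{(j)}_m)_x\rangle(Q^{(m)}(x_j))^\top$. Jets: $\mathcal J_f=\big[f(x_1),\tfrac{f'(x_1)}{1!},\dots,\tfrac{f^{(\kappa^{(1)}-1)}(x_1)}{(\kappa^{(1)}-1)!},\dots,f(x_q),\dots,\tfrac{f^{(\kappa^{(q)}-1)}(x_q)}{(\kappa^{(q)}-1)!}\big]\in\mathbb C^{p\times Np}$; $\mathcal J^{[0,1]}_K(x)\in\mathbb C^{Np\times p}$ is the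 block column with blocks, same order, $\frac1{m!}\partial_y^mK(x,y)|_{y=x_j}$. $\langle P(x),(\beta)_x\rangle\in\mathbb C^{p\times Np}$ is the block row $[\langle P,(\beta^{(1)}_0)_x\rangle,\dots,\langle P,(\beta^{(1)}_{\kappa^{(1)}-1})_x\rangle,\dots,\langle P,(\beta^{(q)}_{\kappa^{(q)}-1})_x\rangle]$; for a block column $F(x)$ of $N$ matrix polynomials $F_1,\dots,F_N$, $\langle F(x),(\beta)_x\rangle\in\mathbb C^{Np\times Np}$ has $r$-th block row $\langle F_r(x),(\beta)_x\rangle$. Subspaces: $\operatorname{Ker}^R_\beta=\{P\in\mathbb C^{p\times p}[x]:\langle(\beta^{(j)}_m)_x,P(x)\rangle=0_p\ \text{for all } j,m\}$; $\mathbb I=(x-x_1)^{\kappa^{(1)}}\cdots(x-x_q)^{\kappa^{(q)}}\mathbb C^{p\times p}[x]$. For a set $S$ of matrix polynomials, $S^{\perp^R_u}=\{Q:\langle P(x),Q(y)\rangle_u=0_p\ \forall P\in S\}$ and $S^{\perp^L_u}=\{Q:\langle Q(x),P(y)\rangle_u=0_p\ \forall P\in S\}$. *)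

From HB Require Import structures.
From mathcomp Require Import all_boot all_order all_algebra.
From mathcomp Require Import reals.
From mathcomp Require Import complex.

Set Implicit Arguments.
Unset Strict Implicit.
Unset Printing Implicit Defensive.

Import Order.TTheory GRing.Theory Num.Theory.
Local Open Scope ring_scope.

(* Bivariate polynomials: {poly {poly C}}, the OUTER variable is y and the  *)
(* coefficients are polynomials in the INNER variable x.                     *)

Section Uvarov.
Variable R : realType.
Local Notation C := (R[i]).
Variable p : nat.

(* A continuous linear functional on C[x] (every linear functional on C[x] *)
(* is continuous for the standard inductive-limit topology).               *)
Definition lin_functional (f : {poly C} -> C) : Prop :=
  forall (a : C) (g h : {poly C}), f (a *: g + h) = a * f g + f h.

Definition lin_functional2 (f : {poly {poly C}} -> C) : Prop :=
  forall (a : C) (g h : {poly {poly C}}), f (a%:P%:P * g + h) = a * f g + f h.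

Definition kernel_mx := 'I_p -> 'I_p -> {poly {poly C}} -> C.
Definition is_kernel_mx (w : kernel_mx) : Prop :=
  forall k l, lin_functional2 (w k l).

Definition functional_mx := 'I_p -> 'I_p -> {poly C} -> C.
Definition is_functional_mx (b : functional_mx) : Prop :=
  forall k l, lin_functional (b k l).

Definition polyX (f : {poly C}) : {poly {poly C}} := f%:P.
Definition polyY (f : {poly C}) : {poly {poly C}} := map_poly polyC f.

Definition bform (w : kernel_mx) (P Q : 'M[{poly C}]_p) : 'M[C]_p :=
  \matrix_(i, j) \sum_k \sum_l w k l (polyX (P i k) * polyY (Q j l)).

Definition gram (w : kernel_mx) (k l : nat) : 'M[C]_p :=
  bform w ('X^k)%:M ('X^l)%:M.

Definition quasidefinite (w : kernel_mx) : Prop :=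
  forall n : nat, (\mxblock_(i < n.+1, j < n.+1) gram w i j) \in unitmx.

Definition monic_mxpoly (n : nat) (P : 'M[{poly C}]_p) : Prop :=
  forall i j, (size (P i j - (i == j)%:R * 'X^n)%R <= n)%N.

Definition biorthogonal_families (w : kernel_mx) (P1 P2 : nat -> 'M[{poly C}]_p) :
  Prop :=
  (forall n, monic_mxpoly n (P1 n)) /\ (forall n, monic_mxpoly n (P2 n)) /\
  (forall n m, n != m -> bform w (P1 n) (P2 m) = 0).

Definition Hnorm (w : kernel_mx) (P1 P2 : nat -> 'M[{poly C}]_p) (n : nat) :
  'M[C]_p := bform w (P1 n) (P2 n).

Definition CDkernel (w : kernel_mx) (P1 P2 : nat -> 'M[{poly C}]_p) (n : nat) :
  'M[{poly {poly C}}]_p :=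
  \sum_(k < n.+1)
    ((map_mx polyY (P2 k))^T *m map_mx (fun c : C => c%:P%:P) (invmx (Hnorm w P1 P2 k))
       *m map_mx polyX (P1 k)).

Definition pairR (P : 'M[{poly C}]_p) (b : functional_mx) : 'M[C]_p :=
  \matrix_(i, l) \sum_k b k l (P i k).
Definition pairL (b : functional_mx) (P : 'M[{poly C}]_p) : 'M[C]_p :=
  \matrix_(k, j) \sum_l b k l (P l j).

(* <K(x,y), b_x>, with y held fixed: a matrix polynomial in y *)
Definition pairR2 (K : 'M[{poly {poly C}}]_p) (b : functional_mx) :
  'M[{poly C}]_p :=
  \matrix_(i, l) \sum_k map_poly (b k l) (K i k).

(* Uvarov data: q nodes xs : 'I_q -> R, multiplicities kappa, and functionals *)
(* beta j m for m < kappa j.  The index set of the N = sum_j kappa j blocks is *)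
(* T := {j : 'I_q & 'I_(kappa j)}, enumerated by enum_val.                    *)
Variables (q : nat) (xs : 'I_q -> R) (kappa : 'I_q -> nat).
Variable beta : forall j : 'I_q, 'I_(kappa j) -> functional_mx.

Definition Tidx := {j : 'I_q & 'I_(kappa j)}.
Definition Nb := #|{: Tidx}|.
Definition node (t : Tidx) : C := ((xs (tag t))%:C)%C.
Definition ord_of (t : Tidx) : nat := tagged t.
Definition betaT (t : Tidx) : functional_mx := beta (tagged t).
Definition blk (a : 'I_Nb) : Tidx := enum_val a.

Definition vpert : kernel_mx := fun k l f =>
  \sum_(t : Tidx) betaT t k l ((f^`N(ord_of t)).[(node t)%:P]).
Definition uhat (u : kernel_mx) : kernel_mx := fun k l f => u k l f + vpert k l f.

Definition jet (P : 'M[{poly C}]_p) : 'M[C]_(p, \sum_(a < Nb) p) :=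
  \mxrow_(a < Nb) map_mx (fun g : {poly C} => (g^`N(ord_of (blk a))).[node (blk a)]) P.

Definition J01blk (K : 'M[{poly {poly C}}]_p) (a : 'I_Nb) : 'M[{poly C}]_p :=
  map_mx (fun g : {poly {poly C}} => (g^`N(ord_of (blk a))).[(node (blk a))%:P]) K.
Definition J01 (K : 'M[{poly {poly C}}]_p) : 'M[{poly C}]_(\sum_(a < Nb) p, p) :=
  \mxcol_(a < Nb) J01blk K a.

Definition pairRbeta (P : 'M[{poly C}]_p) : 'M[C]_(p, \sum_(a < Nb) p) :=
  \mxrow_(a < Nb) pairR P (betaT (blk a)).
Definition pairR2beta (K : 'M[{poly {poly C}}]_p) : 'M[{poly C}]_(p, \sum_(a < Nb) p) :=
  \mxrow_(a < Nb) pairR2 K (betaT (blk a)).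

Definition Mmat (K : 'M[{poly {poly C}}]_p) : 'M[C]_(\sum_(a < Nb) p) :=
  1%:M + \mxblock_(a < Nb, b < Nb) pairR (J01blk K a) (betaT (blk b)).

Definition beta_lin_indep : Prop :=
  (forall X : forall j : 'I_q, 'I_(kappa j) -> 'M[C]_p,
     (forall k l (f : {poly C}),
        \sum_(t : Tidx) \sum_r betaT t k r f * X (tag t) (tagged t) r l = 0) ->
     forall j m, X j m = 0) /\
  (forall Y : forall j : 'I_q, 'I_(kappa j) -> 'M[C]_p,
     (forall k l (f : {poly C}),
        \sum_(t : Tidx) \sum_r Y (tag t) (tagged t) k r * betaT t r l f = 0) ->
     forall j m, Y j m = 0).

Definition KerR (P : 'M[{poly C}]_p) : Prop :=
  forall t : Tidx, pairL (betaT t) P = 0.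
Definition ideal_gen : {poly C} := \prod_(j < q) ('X - ((xs j)%:C)%C%:P) ^+ kappa j.
Definition in_ideal (P : 'M[{poly C}]_p) : Prop :=
  exists A : 'M[{poly C}]_p, P = ideal_gen *: A.

Definition perpR_trivial (w : kernel_mx) (S : 'M[{poly C}]_p -> Prop) : Prop :=
  forall Q, (forall P, S P -> bform w P Q = 0) -> Q = 0.
Definition perpL_trivial (w : kernel_mx) (S : 'M[{poly C}]_p -> Prop) : Prop :=
  forall Q, (forall P, S P -> bform w Q P = 0) -> Q = 0.

End Uvarov.

From Pilot Require Import Defs.
From HB Require Import structures.
From mathcomp Require Import all_boot all_order all_algebra.
From mathcomp Require Import reals complex.
Import Order.TTheory GRing.Theory Num.Theory.
Local Open Scope ring_scope.
Set Implicit Arguments. Unset Strict Implicit. Unset Printing Implicit Defensive.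

(* Both <.,.>_u and <.,.>_uhat = <.,.>_u + <.,beta> J^T are bilinear over constant
   matrices, and quasidefiniteness makes each of them nondegenerate on matrix
   polynomials of degree at most n: such a polynomial orthogonal to I x^0, ..., I x^n
   vanishes.  By the reproducing property of K_n, the difference between each
   proposed right-hand side and the perturbed polynomial has degree at most n and
   is uhat-orthogonal to P2_0, ..., P2_n (resp. P1_0, ..., P1_n), hence vanishes;
   pairing with P2_(n+1) then gives hH_(n+1).  Nonsingularity of M_n comes from the
   same mechanism: for a left null vector Z of M_n, the polynomial Z J^[0,1]_(K_n)(x)
   is uhat-orthogonal to P2_0, ..., P2_n, hence zero, so that
   Z = Z M_n - <Z J^[0,1]_(K_n), beta> = 0. *)

Local Notation cst := (map_mx polyC).

Lemma map_mxrow (T T' : Type) (f : T -> T') m n (p_ : 'I_n -> nat)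
    (B_ : forall j, 'M[T]_(m, p_ j)) :
  map_mx f (\mxrow_j B_ j) = \mxrow_j map_mx f (B_ j).
Proof. by apply/matrixP => i j; rewrite !mxE. Qed.

(** * Matrix polynomials *)

Section MatrixPolynomials.
Variable R : comNzRingType.

Definition mxsize_le r c n (A : 'M[{poly R}]_(r, c)) := forall i j, (size (A i j) <= n)%N.
Definition mxcoef r c k (A : 'M[{poly R}]_(r, c)) : 'M[R]_(r, c) :=
  map_mx (fun g : {poly R} => g`_k) A.
Definition mxmonic p k (P : 'M[{poly R}]_p) := mxsize_le k (P - ('X^k)%:M).

Lemma mxpoly_expand r c n (A : 'M[{poly R}]_(r, c)) : mxsize_le n A ->
  A = \sum_(k < n) cst (mxcoef k A) *m ('X^k)%:M.
Proof.
move=> hA; apply/matrixP => i j; rewrite summxE.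
under eq_bigr do rewrite mul_mx_scalar !mxE.
apply/polyP => d; rewrite coef_sum.
under eq_bigr do rewrite mulrC coefCM coefXn.
case: (ltnP d n) => hd.
  rewrite (bigD1 (Ordinal hd)) //= eqxx mulr1 big1 ?addr0 // => k hk.
  suff -> : (d == k) = false by rewrite mulr0.
  by apply/negbTE; apply: contra hk => /eqP e; apply/eqP/val_inj.
rewrite big1; first by rewrite nth_default // (leq_trans (hA i j) hd).
move=> k _; case: eqP => [e|]; rewrite ?mulr0 //.
by move: (ltn_ord k); rewrite -e ltnNge hd.
Qed.

Lemma mxcoef_cstMl r c d k (Z : 'M[R]_(r, c)) (P : 'M[{poly R}]_(c, d)) :
  mxcoef k (cst Z *m P) = Z *m mxcoef k P.
Proof.
apply/matrixP => i j; rewrite !mxE coef_sum; apply: eq_bigr => l _.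
by rewrite !mxE coefCM.
Qed.

Section SizeBounds.
Variables (r c n : nat).
Implicit Types A B : 'M[{poly R}]_(r, c).

Lemma mxsize_leD A B : mxsize_le n A -> mxsize_le n B -> mxsize_le n (A + B).
Proof. by move=> hA hB i j; rewrite mxE (leq_trans (size_polyD _ _)) // geq_max hA hB. Qed.

Lemma mxsize_leB A B : mxsize_le n A -> mxsize_le n B -> mxsize_le n (A - B).
Proof. by move=> hA hB; apply: mxsize_leD => // i j; rewrite mxE size_polyN. Qed.

Lemma mxsize_le_sum (I : finType) (F : I -> 'M[{poly R}]_(r, c)) :
  (forall i, mxsize_le n (F i)) -> mxsize_le n (\sum_i F i).
Proof.
move=> hF; apply: (big_ind (mxsize_le n)) => //; last exact: mxsize_leD.
by move=> i j; rewrite mxE size_poly0.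
Qed.

Lemma mxsize_le_leq m A : (n <= m)%N -> mxsize_le n A -> mxsize_le m A.
Proof. by move=> hnm hA i j; apply: leq_trans (hA i j) hnm. Qed.

Lemma mxsize_le_cstMl k (Z : 'M[R]_(k, r)) A : mxsize_le n A -> mxsize_le n (cst Z *m A).
Proof.
move=> hA i j; rewrite mxE; apply: (big_ind (fun g : {poly R} => size g <= n)%N).
- by rewrite size_poly0.
- by move=> g h hg hh; rewrite (leq_trans (size_polyD _ _)) // geq_max hg hh.
by move=> l _; rewrite mxE mul_polyC (leq_trans (size_scale_leq _ _)) // hA.
Qed.

End SizeBounds.

Section Monic.
Variables (p k : nat).
Implicit Types P Q : 'M[{poly R}]_p.

Lemma mxmonic_size P : mxmonic k P -> mxsize_le k.+1 P.
Proof.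
move=> hP; rewrite -[P](subrK ('X^k)%:M); apply: mxsize_leD.
  exact: mxsize_le_leq (leqnSn _) hP.
by move=> i j; rewrite mxE; case: (i == j); rewrite /= ?size_polyXn ?size_poly0.
Qed.

Lemma mxmonicB P Q : mxmonic k P -> mxmonic k Q -> mxsize_le k (P - Q).
Proof.
move=> hP hQ; have -> : P - Q = (P - ('X^k)%:M) - (Q - ('X^k)%:M).
  by rewrite opprB addrA subrK.
exact: mxsize_leB.
Qed.

Lemma mxcoef_mxmonic P : mxmonic k P -> mxcoef k P = 1%:M.
Proof.
move=> hP; apply/matrixP => i j; have := hP i j; rewrite !mxE => hPij.
rewrite -[P i j](subrK ('X^k *+ (i == j))) coefD (nth_default _ hPij) add0r.
by rewrite coefMn coefXn eqxx.
Qed.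

End Monic.

End MatrixPolynomials.

(** * Matrix-valued bilinear forms *)

Section MatrixForms.
Variables (F : fieldType) (p : nat).
Local Notation PM := 'M[{poly F}]_p.
Local Notation X k := (('X^k)%:M : PM).

Definition mxbilinear (bf : PM -> PM -> 'M[F]_p) : Prop :=
  (forall A P P' Q, bf (cst A *m P + P') Q = A *m bf P Q + bf P' Q) /\
  (forall A P Q Q', bf P (cst A *m Q + Q') = bf P Q *m A^T + bf P Q').

(* Transposing and swapping the arguments turns right-hand statements into
   left-hand ones. *)
Definition mxform_tr (bf : PM -> PM -> 'M[F]_p) P Q := (bf Q P)^T.

Definition mxform_gram (bf : PM -> PM -> 'M[F]_p) n :=
  \mxblock_(i < n.+1, j < n.+1) bf (X i) (X j).

Definition quasidefinite_form bf := forall n, mxform_gram bf n \in unitmx.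

Lemma mxbilinearD bf bf' : mxbilinear bf -> mxbilinear bf' ->
  mxbilinear (fun P Q => bf P Q + bf' P Q).
Proof.
move=> [hl hr] [hl' hr']; split=> *; first by rewrite hl hl' mulmxDr addrACA.
by rewrite hr hr' mulmxDl addrACA.
Qed.

Section Bilinear.
Variable bf : PM -> PM -> 'M[F]_p.
Hypothesis hbf : mxbilinear bf.

Lemma mxbilinear_tr : mxbilinear (mxform_tr bf).
Proof.
split=> A P P' Q; rewrite /mxform_tr.
  by rewrite (proj2 hbf) linearD /= trmx_mul trmxK.
by rewrite (proj1 hbf) linearD /= trmx_mul.
Qed.

Lemma mxformDl P P' Q : bf (P + P') Q = bf P Q + bf P' Q.
Proof. by have := (proj1 hbf) 1 P P' Q; rewrite map_mx1 !mul1mx. Qed.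

Lemma mxformDr P Q Q' : bf P (Q + Q') = bf P Q + bf P Q'.
Proof. by have := (proj2 hbf) 1 P Q Q'; rewrite map_mx1 trmx1 !mul1mx mulmx1. Qed.

Lemma mxform0l Q : bf 0 Q = 0.
Proof. by apply: (addrI (bf 0 Q)); rewrite -mxformDl !addr0. Qed.

Lemma mxform0r P : bf P 0 = 0.
Proof. by apply: (addrI (bf P 0)); rewrite -mxformDr !addr0. Qed.

Lemma mxformMl A P Q : bf (cst A *m P) Q = A *m bf P Q.
Proof. by have := (proj1 hbf) A P 0 Q; rewrite !addr0 mxform0l addr0. Qed.

Lemma mxformMr A P Q : bf P (cst A *m Q) = bf P Q *m A^T.
Proof. by have := (proj2 hbf) A P Q 0; rewrite !addr0 mxform0r addr0. Qed.

Lemma mxformBl P P' Q : bf (P - P') Q = bf P Q - bf P' Q.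
Proof.
have := (proj1 hbf) (- 1) P' P Q.
by rewrite map_mxN map_mx1 !mulNmx !mul1mx addrC [RHS]addrC.
Qed.

Lemma mxformBr P Q Q' : bf P (Q - Q') = bf P Q - bf P Q'.
Proof.
have := (proj2 hbf) (- 1) P Q' Q.
by rewrite map_mxN map_mx1 linearN /= trmx1 !mulNmx !mul1mx mulmxN mulmx1 addrC [RHS]addrC.
Qed.

Lemma mxform_suml (I : finType) (G : I -> PM) Q : bf (\sum_i G i) Q = \sum_i bf (G i) Q.
Proof. exact: (big_morph (bf^~ Q) (fun P P' => mxformDl P P' Q) (mxform0l Q)). Qed.

Lemma mxform_sumr (I : finType) (G : I -> PM) P : bf P (\sum_i G i) = \sum_i bf P (G i).
Proof. exact: (big_morph (bf P) (mxformDr P) (mxform0r P)). Qed.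

Lemma mxform_monic_spanr (G : nat -> PM) A n : (forall k, mxmonic k (G k)) ->
  (forall l, (l <= n)%N -> bf A (G l) = 0) -> forall l, (l <= n)%N -> bf A (X l) = 0.
Proof.
move=> hG hA; elim/ltn_ind => l IH hl.
have -> : X l = G l - (G l - X l) by rewrite opprB addrC subrK.
rewrite mxformBr hA // (mxpoly_expand (hG l)) mxform_sumr big1 ?subr0 // => k _.
by rewrite mxformMr IH ?mul0mx // (leq_trans _ hl) // ltnW.
Qed.

End Bilinear.

Lemma mxform_monic_spanl bf (G : nat -> PM) A n :
  mxbilinear bf -> (forall k, mxmonic k (G k)) ->
  (forall l, (l <= n)%N -> bf (G l) A = 0) -> forall l, (l <= n)%N -> bf (X l) A = 0.
Proof.
move=> hbf hG hA l hl; apply: trmx_inj; rewrite trmx0.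
apply: (mxform_monic_spanr (mxbilinear_tr hbf) hG) hl => l' hl'.
by rewrite /mxform_tr hA // trmx0.
Qed.

Section Quasidefinite.
Variable bf : PM -> PM -> 'M[F]_p.
Hypothesis hbf : mxbilinear bf.
Hypothesis hqd : quasidefinite_form bf.

Lemma mxform_nondegl n A : mxsize_le n.+1 A ->
  (forall l, (l <= n)%N -> bf A (X l) = 0) -> A = 0.
Proof.
move=> hA hA0.
have hbfX l : bf A (X l) = \sum_(k < n.+1) mxcoef k A *m bf (X k) (X l).
  rewrite {1}(mxpoly_expand hA) (mxform_suml hbf).
  by apply: eq_bigr => k _; rewrite (mxformMl hbf).
suff coef0 (k : 'I_n.+1) : mxcoef k A = 0.
  by rewrite (mxpoly_expand hA) big1 // => k _; rewrite coef0 map_mx0 mul0mx.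
apply/row_matrixP => i; rewrite row0.
pose c := \mxrow_(k < n.+1) row i (mxcoef k A).
have c0 : c = 0.
  suff cG : c *m mxform_gram bf n = 0 by rewrite -(mulmxK (hqd n) c) cG mul0mx.
  rewrite mul_mxrow_mxblock -(mxrow0 (q_ := fun _ : 'I_n.+1 => p)); apply: eq_mxrow => l.
  rewrite -[RHS](row0 _ _ i) -(hA0 l (ltn_ord l)) hbfX raddf_sum /=.
  by apply: eq_bigr => k' _; rewrite row_mul.
by rewrite -(mxrowK (fun k => row i (mxcoef k A)) k) -/c c0 submxrow0.
Qed.

End Quasidefinite.

Lemma quasidefinite_tr bf : quasidefinite_form bf -> quasidefinite_form (mxform_tr bf).
Proof.
move=> hqd n; have -> : mxform_gram (mxform_tr bf) n = (mxform_gram bf n)^T.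
  by rewrite /mxform_gram tr_mxblock.
by rewrite unitmx_tr.
Qed.

Lemma mxform_nondegr bf n A : mxbilinear bf -> quasidefinite_form bf -> mxsize_le n.+1 A ->
  (forall l, (l <= n)%N -> bf (X l) A = 0) -> A = 0.
Proof.
move=> hbf hqd hA hA0.
apply: (mxform_nondegl (mxbilinear_tr hbf) (quasidefinite_tr hqd) hA) => l hl.
by rewrite /mxform_tr hA0 // trmx0.
Qed.

Lemma lker0_unitmx m n (A : 'M[F]_n) : ((0 < n) -> (0 < m))%N ->
  (forall Z : 'M[F]_(m, n), Z *m A = 0 -> Z = 0) -> A \in unitmx.
Proof.
move=> hmn hA; rewrite unitmxE unitfE; apply/negP => /det0P [v nz hv].
have n_gt0 : (0 < n)%N by case: n {A hA hmn hv} v nz => // v; rewrite [v]thinmx0 eqxx.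
pose Z : 'M[F]_(m, n) := \matrix_(i, j) v 0 j.
have Z0 : Z = 0.
  apply: hA; apply/matrixP => i j; have := congr1 (fun w : 'rV_n => w 0 j) hv.
  by rewrite !mxE => e; rewrite -[RHS]e; apply: eq_bigr => r _; rewrite mxE.
apply: (negP nz); apply/eqP/rowP => j.
by have := congr1 (fun M : 'M_(m, n) => M (Ordinal (hmn n_gt0)) j) Z0; rewrite !mxE => ->.
Qed.

Section Biorthogonal.
Variable bf : PM -> PM -> 'M[F]_p.
Hypotheses (hbf : mxbilinear bf) (hqd : quasidefinite_form bf).
Variables F1 F2 : nat -> PM.
Hypotheses (hF1 : forall k, mxmonic k (F1 k)) (hF2 : forall k, mxmonic k (F2 k)).
Hypothesis horth : forall n m, n != m -> bf (F1 n) (F2 m) = 0.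

Lemma biorth_orthr k l : (l < k)%N -> bf (F1 k) (X l) = 0.
Proof.
case: k => // m; rewrite ltnS => hl.
apply: (mxform_monic_spanr hbf hF2) hl => l' hl'; apply: horth.
by rewrite eq_sym neq_ltn ltnS hl'.
Qed.

Lemma biorth_orthl k l : (l < k)%N -> bf (X l) (F2 k) = 0.
Proof.
case: k => // m; rewrite ltnS => hl.
apply: (mxform_monic_spanl hbf hF1) hl => l' hl'; apply: horth.
by rewrite neq_ltn ltnS hl'.
Qed.

Lemma biorth_norm_mxmonic k Q : mxmonic k Q -> bf (F1 k) Q = bf (F1 k) (F2 k).
Proof.
move=> hQ; apply/eqP; rewrite -subr_eq0 -(mxformBr hbf).
rewrite (mxpoly_expand (mxmonicB hQ (hF2 k))) (mxform_sumr hbf) big1 // => l _.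
by rewrite (mxformMr hbf) biorth_orthr ?mul0mx.
Qed.

Lemma biorth_unit k : bf (F1 k) (F2 k) \in unitmx.
Proof.
apply: (@lker0_unitmx p) => // Z hZ.
have A0 : cst Z *m F1 k = 0.
  apply: (mxform_nondegl hbf hqd (mxsize_le_cstMl _ (mxmonic_size (hF1 k)))).
  apply: (mxform_monic_spanr hbf hF2) => l hl; rewrite (mxformMl hbf).
  by have [<-|/horth ->] := eqVneq k l; [exact: hZ | exact: mulmx0].
rewrite -[Z]mulmx1 -(mxcoef_mxmonic (hF1 k)) -mxcoef_cstMl A0.
by apply/matrixP => i j; rewrite !mxE coef0.
Qed.

End Biorthogonal.
End MatrixForms.

(** * Linear functionals and the form of a kernel *)

Section Functionals.
Variable R : realType.
Local Notation C := (R[i]).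

Section Univariate.
Variable f : {poly C} -> C.
Hypothesis hf : lin_functional f.

Lemma lin_functional0 : f 0 = 0.
Proof.
have := hf 1 0 0; rewrite scaler0 addr0 mul1r => e.
by apply: (addrI (f 0)); rewrite addr0 -e.
Qed.

Lemma lin_functionalD g h : f (g + h) = f g + f h.
Proof. by rewrite -[g]scale1r hf mul1r scale1r. Qed.

Lemma lin_functionalZ a g : f (a *: g) = a * f g.
Proof. by rewrite -[a *: g]addr0 hf lin_functional0 addr0. Qed.

Lemma lin_functional_sum (I : finType) (G : I -> {poly C}) :
  f (\sum_i G i) = \sum_i f (G i).
Proof. exact: (big_morph f lin_functionalD lin_functional0). Qed.

Lemma map_mx_lin_functional_cstMl m n k (A : 'M[C]_(m, n)) (P : 'M[{poly C}]_(n, k)) :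
  map_mx f (cst A *m P) = A *m map_mx f P.
Proof.
apply/matrixP => i j; rewrite !mxE lin_functional_sum; apply: eq_bigr => r _.
by rewrite !mxE mul_polyC lin_functionalZ.
Qed.

Lemma map_poly_lin_functional_sum (I : finType) (G : I -> {poly {poly C}}) :
  map_poly f (\sum_i G i) = \sum_i map_poly f (G i).
Proof.
apply/polyP => d; rewrite coef_map_id0 ?lin_functional0 // !coef_sum lin_functional_sum.
by apply: eq_bigr => i _; rewrite coef_map_id0 ?lin_functional0.
Qed.

Lemma map_poly_lin_functional_polyYX (g h : {poly C}) :
  map_poly f (polyY g * Defs.polyX h) = f h *: g.
Proof.
apply/polyP => d; rewrite coef_map_id0 ?lin_functional0 // /Defs.polyX mulrC mul_polyC.
by rewrite coefZ /polyY coef_map /= mulrC mul_polyC lin_functionalZ coefZ mulrC.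
Qed.

End Univariate.

Section Bivariate.
Variable f : {poly {poly C}} -> C.
Hypothesis hf : lin_functional2 f.

Lemma lin_functional2_comb (I : finType) (a : I -> C) G H :
  f (\sum_r (a r)%:P%:P * G r + H) = \sum_r a r * f (G r) + f H.
Proof.
have f0 : f 0 = 0.
  have := hf 1 0 0; rewrite mulr0 addr0 mul1r => e.
  by apply: (addrI (f 0)); rewrite addr0 -e.
have fD g h : f (g + h) = f g + f h by have := hf 1 g h; rewrite !polyC1 !mul1r.
rewrite fD (big_morph f fD f0); congr (_ + _); apply: eq_bigr => r _.
by rewrite -[_ * G r]addr0 hf f0 addr0.
Qed.

End Bivariate.

Lemma bform_mxbilinear p (u : kernel_mx R p) : is_kernel_mx u -> mxbilinear (bform u).
Proof.
move=> hu; split=> A P P' Q; apply/matrixP => i j; rewrite !mxE.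
- have e k l : u k l (Defs.polyX ((cst A *m P + P') i k) * polyY (Q j l)) =
     \sum_r A i r * u k l (Defs.polyX (P r k) * polyY (Q j l)) +
     u k l (Defs.polyX (P' i k) * polyY (Q j l)).
    rewrite -lin_functional2_comb // !mxE /Defs.polyX rmorphD rmorph_sum /=.
    rewrite mulrDl mulr_suml.
    by congr (u k l (_ + _)); apply: eq_bigr => r _; rewrite mxE rmorphM mulrA.
  under eq_bigr do under eq_bigr do rewrite e.
  under eq_bigr do rewrite big_split /=.
  rewrite big_split /=; congr (_ + _).
  under [RHS]eq_bigr do rewrite mxE big_distrr /=.
  rewrite [RHS]exchange_big /=; apply: eq_bigr => k _.
  under [RHS]eq_bigr do rewrite big_distrr /=.
  by rewrite [RHS]exchange_big.
- have e k l : u k l (Defs.polyX (P i k) * polyY ((cst A *m P' + Q) j l)) =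
     \sum_r A j r * u k l (Defs.polyX (P i k) * polyY (P' r l)) +
     u k l (Defs.polyX (P i k) * polyY (Q j l)).
    rewrite -lin_functional2_comb // !mxE /polyY rmorphD rmorph_sum /= mulrDr mulr_sumr.
    congr (u k l (_ + _)); apply: eq_bigr => r _.
    by rewrite mxE rmorphM /= map_polyC mulrCA.
  under eq_bigr do under eq_bigr do rewrite e.
  under eq_bigr do rewrite big_split /=.
  rewrite big_split /=; congr (_ + _).
  under [RHS]eq_bigr do rewrite !mxE mulrC big_distrr /=.
  rewrite [RHS]exchange_big /=; apply: eq_bigr => k _.
  under [RHS]eq_bigr do rewrite big_distrr /=.
  by rewrite [RHS]exchange_big.
Qed.

Lemma biorthogonal_familiesP p (w : kernel_mx R p) (F1 F2 : nat -> 'M[{poly C}]_p) :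
  biorthogonal_families w F1 F2 ->
  [/\ forall k, mxmonic k (F1 k), forall k, mxmonic k (F2 k)
    & forall n m, n != m -> bform w (F1 n) (F2 m) = 0].
Proof.
have monicP k (P : 'M[{poly C}]_p) : monic_mxpoly k P -> mxmonic k P.
  by move=> hP i j; rewrite !mxE -mulr_natl; apply: hP.
by case=> hF1 [hF2 horth]; split=> // k; apply: monicP.
Qed.

End Functionals.

(** * The Uvarov perturbation *)

Section UvarovPerturbation.
Variable R : realType.
Local Notation C := (R[i]).
Variable p : nat.
Local Notation PM := 'M[{poly C}]_p.
Variables (q : nat) (xs : 'I_q -> R) (kappa : 'I_q -> nat).
Variable beta : forall j : 'I_q, 'I_(kappa j) -> functional_mx R p.
Arguments beta : clear implicits.
Hypothesis hbeta : forall j m, is_functional_mx (beta j m).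
Local Notation Nb := (Nb kappa).
Local Notation Np := (\sum_(a < Nb) p)%N.
Local Notation beta_ a := (betaT beta (blk a)).

Lemma Np_gt0 : (0 < Np)%N -> (0 < p)%N.
Proof. by rewrite sum_nat_const muln_gt0 => /andP[]. Qed.

Section Pairing.
Variable b : functional_mx R p.
Hypothesis hb : is_functional_mx b.

Lemma pairR_cstMlD (A : 'M[C]_p) (P P' : PM) :
  pairR (cst A *m P + P') b = A *m pairR P b + pairR P' b.
Proof.
apply/matrixP => i l; rewrite !mxE.
under eq_bigr do rewrite mxE lin_functionalD // mxE lin_functional_sum //.
rewrite big_split /=; congr (_ + _).
under eq_bigr do under eq_bigr do rewrite mxE mul_polyC lin_functionalZ //.
rewrite exchange_big /=; apply: eq_bigr => r _.
by rewrite mxE big_distrr.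
Qed.

Lemma pairR0 : pairR (0 : PM) b = 0.
Proof.
by apply/matrixP => i l; rewrite !mxE big1 // => k _; rewrite mxE lin_functional0.
Qed.

Lemma pairR_cstMl (A : 'M[C]_p) (P : PM) : pairR (cst A *m P) b = A *m pairR P b.
Proof. by rewrite -[cst A *m P]addr0 pairR_cstMlD pairR0 addr0. Qed.

Lemma pairR_sum (I : finType) (G : I -> PM) : pairR (\sum_i G i) b = \sum_i pairR (G i) b.
Proof.
have pairRD P P' : pairR (P + P') b = pairR P b + pairR P' b.
  by have := pairR_cstMlD 1 P P'; rewrite map_mx1 !mul1mx.
exact: (big_morph (fun P => pairR P b) pairRD pairR0).
Qed.

End Pairing.

Lemma pairRbeta_cstMlD (A : 'M[C]_p) (P P' : PM) :
  pairRbeta beta (cst A *m P + P') = A *m pairRbeta beta P + pairRbeta beta P'.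
Proof.
rewrite /pairRbeta mul_mxrow -mxrowD; apply: eq_mxrow => a.
by apply: pairR_cstMlD; apply: hbeta.
Qed.

Lemma pairRbeta0 : pairRbeta beta (0 : PM) = 0.
Proof.
rewrite /pairRbeta -(mxrow0 (q_ := fun _ : 'I_Nb => p)); apply: eq_mxrow => a.
by apply: pairR0; apply: hbeta.
Qed.

Definition jet_fun (a : 'I_Nb) (g : {poly C}) : C :=
  (g^`N(ord_of (blk a))).[node xs (blk a)].
Definition jet_blk (a : 'I_Nb) (P : PM) : 'M[C]_p := map_mx (jet_fun a) P.

Lemma jetE P : jet xs kappa P = \mxrow_a jet_blk a P.
Proof. by []. Qed.

Lemma jet_fun_lin a : lin_functional (jet_fun a).
Proof. by move=> c g h; rewrite /jet_fun nderivnD nderivnZ hornerD hornerZ. Qed.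

Lemma jet_blk_cstMl (A : 'M[C]_p) (P : PM) a : jet_blk a (cst A *m P) = A *m jet_blk a P.
Proof. exact: (map_mx_lin_functional_cstMl (jet_fun_lin a)). Qed.

Lemma jet_blk_sum (I : finType) (G : I -> PM) a :
  jet_blk a (\sum_i G i) = \sum_i jet_blk a (G i).
Proof.
apply/matrixP => i j; rewrite !mxE !summxE lin_functional_sum; last exact: jet_fun_lin.
by apply: eq_bigr => r _; rewrite mxE.
Qed.

Lemma jet_cstMlD (A : 'M[C]_p) (P P' : PM) :
  jet xs kappa (cst A *m P + P') = A *m jet xs kappa P + jet xs kappa P'.
Proof.
rewrite !jetE mul_mxrow -mxrowD; apply: eq_mxrow => a.
rewrite -jet_blk_cstMl; apply/matrixP => i j.
by rewrite !mxE lin_functionalD //; apply: jet_fun_lin.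
Qed.

Lemma horner_nderivn_polyXY (f g : {poly C}) m c :
  ((Defs.polyX f * polyY g)^`N(m)).[c%:P] = (g^`N(m)).[c] *: f.
Proof.
rewrite /Defs.polyX mul_polyC nderivnZ hornerZ /polyY nderivn_map horner_map /=.
by rewrite mulrC mul_polyC.
Qed.

Lemma bform_vpert (P Q : PM) :
  bform (vpert xs beta) P Q = pairRbeta beta P *m (jet xs kappa Q)^T.
Proof.
rewrite jetE tr_mxrow mul_mxrow_mxcol; apply/matrixP => i j.
rewrite !mxE summxE.
have e k l (t : Tidx kappa) : betaT beta t k l
    ((Defs.polyX (P i k) * polyY (Q j l))^`N(ord_of t)).[(node xs t)%:P] =
    ((Q j l)^`N(ord_of t)).[node xs t] * betaT beta t k l (P i k).
  by rewrite horner_nderivn_polyXY lin_functionalZ //; apply: hbeta.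
under eq_bigr do under eq_bigr do rewrite /vpert (eq_bigr _ (fun t _ => e _ _ t)).
have reindex (G : Tidx kappa -> C) : \sum_t G t = \sum_(a < Nb) G (blk a).
  by rewrite /blk -big_enum_val.
under eq_bigr do under eq_bigr do rewrite reindex.
rewrite exchange_big /=; under eq_bigr do rewrite exchange_big /=.
rewrite exchange_big /=; apply: eq_bigr => a _.
rewrite mxE; apply: eq_bigr => l _.
rewrite !mxE big_distrl /=; apply: eq_bigr => k _.
by rewrite mulrC.
Qed.

Lemma vpert_mxbilinear : mxbilinear (bform (vpert xs beta)).
Proof.
split=> A P P' Q; rewrite !bform_vpert.
  by rewrite pairRbeta_cstMlD mulmxDl mulmxA.
by rewrite jet_cstMlD linearD /= trmx_mul mulmxDr mulmxA.
Qed.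

Lemma bform_uhat (u : kernel_mx R p) P Q :
  bform (uhat xs beta u) P Q = bform u P Q + pairRbeta beta P *m (jet xs kappa Q)^T.
Proof.
rewrite -bform_vpert; apply/matrixP => i j; rewrite !mxE -big_split.
by apply: eq_bigr => k _; rewrite -big_split.
Qed.

Lemma uhat_mxbilinear (u : kernel_mx R p) :
  is_kernel_mx u -> mxbilinear (bform (uhat xs beta u)).
Proof.
move=> hu; have [hl hr] := mxbilinearD (bform_mxbilinear hu) vpert_mxbilinear.
by split=> *; rewrite !bform_uhat -!bform_vpert; [apply: hl | apply: hr].
Qed.

Lemma J01blk_polyYX (A B : PM) a :
  J01blk xs (map_mx (@polyY R) A *m map_mx (@Defs.polyX R) B) a = cst (jet_blk a A) *m B.
Proof.
apply/matrixP => i j; rewrite !mxE /= raddf_sum horner_sum; apply: eq_bigr => r _.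
by rewrite !mxE mulrC horner_nderivn_polyXY mul_polyC.
Qed.

Lemma J01blk_sum (I : finType) (G : I -> 'M[{poly {poly C}}]_p) (a : 'I_Nb) :
  J01blk xs (\sum_i G i) a = \sum_i J01blk xs (G i) a.
Proof.
apply/matrixP => i j; rewrite !mxE !summxE /= raddf_sum horner_sum.
by apply: eq_bigr => r _; rewrite mxE.
Qed.

Section PairingY.
Variable b : functional_mx R p.
Hypothesis hb : is_functional_mx b.

Lemma pairR2_polyYX (A B : PM) :
  pairR2 (map_mx (@polyY R) A *m map_mx (@Defs.polyX R) B) b = A *m cst (pairR B b).
Proof.
apply/matrixP => i l; rewrite !mxE.
under eq_bigr do rewrite mxE map_poly_lin_functional_sum //.
rewrite exchange_big /=; apply: eq_bigr => r _.
under eq_bigr do rewrite !mxE map_poly_lin_functional_polyYX //.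
by rewrite !mxE -scaler_suml mulrC mul_polyC.
Qed.

Lemma pairR2_sum (I : finType) (G : I -> 'M[{poly {poly C}}]_p) :
  pairR2 (\sum_i G i) b = \sum_i pairR2 (G i) b.
Proof.
apply/matrixP => i l; rewrite !mxE summxE.
under eq_bigr do rewrite summxE map_poly_lin_functional_sum //.
by rewrite exchange_big /=; apply: eq_bigr => r _; rewrite !mxE.
Qed.

End PairingY.

(** * Christoffel--Darboux kernels and the perturbed families *)

Definition J01beta (K : 'M[{poly {poly C}}]_p) : 'M[C]_Np :=
  \mxblock_(a < Nb, b < Nb) pairR (J01blk xs K a) (beta_ b).

Lemma pairRbeta_cstMl_J01 K (Z : 'M[C]_(p, Np)) :
  pairRbeta beta (cst Z *m J01 xs kappa K) = Z *m J01beta K.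
Proof.
rewrite /pairRbeta /J01 -[in LHS](submxrowK Z) map_mxrow mul_mxrow_mxcol.
rewrite -[in RHS](submxrowK Z) mul_mxrow_mxblock; apply: eq_mxrow => b.
rewrite pairR_sum; last exact: hbeta.
by apply: eq_bigr => a _; rewrite pairR_cstMl //; apply: hbeta.
Qed.

Lemma pairR2beta_cstMr_tr K (W : 'M[C]_(Np, p)) :
  (pairR2beta beta K *m cst W)^T =
  \sum_a cst (submxrow W^T a) *m (pairR2 K (beta_ a))^T.
Proof.
rewrite trmx_mul map_trmx /pairR2beta tr_mxrow -{1}[W^T]submxrowK map_mxrow.
by rewrite mul_mxrow_mxcol.
Qed.

Section ChristoffelDarboux.
Variable u : kernel_mx R p.
Hypotheses (hu : is_kernel_mx u) (qdu : quasidefinite u).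
Variables P1 P2 : nat -> PM.
Hypothesis bio : biorthogonal_families u P1 P2.

Local Notation bu := (bform u).
Local Notation K := (CDkernel u P1 P2).
Local Notation Hinv k := (invmx (Hnorm u P1 P2 k)).

Lemma P1_mxmonic k : mxmonic k (P1 k).
Proof. by case: (biorthogonal_familiesP bio). Qed.

Lemma P2_mxmonic k : mxmonic k (P2 k).
Proof. by case: (biorthogonal_familiesP bio). Qed.

Lemma bform_P12 n m : n != m -> bu (P1 n) (P2 m) = 0.
Proof. by case: (biorthogonal_familiesP bio) => _ _; apply. Qed.

Lemma Hnorm_unit k : Hnorm u P1 P2 k \in unitmx.
Proof. exact: (biorth_unit (bform_mxbilinear hu) qdu P1_mxmonic P2_mxmonic bform_P12). Qed.

Lemma CDkernel_polyYX n : K n = \sum_(k < n.+1)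
  map_mx (@polyY R) (P2 k)^T *m map_mx (@Defs.polyX R) (cst (Hinv k) *m P1 k).
Proof.
apply: eq_bigr => k _; rewrite map_trmx -mulmxA; congr (_ *m _).
apply/esym/matrixP => i j; rewrite !mxE /Defs.polyX rmorph_sum; apply: eq_bigr => r _.
by rewrite !mxE rmorphM.
Qed.

Lemma J01blk_CD n a : J01blk xs (K n) a =
  \sum_(k < n.+1) cst ((jet_blk a (P2 k))^T *m Hinv k) *m P1 k.
Proof.
rewrite CDkernel_polyYX J01blk_sum; apply: eq_bigr => k _.
by rewrite J01blk_polyYX /jet_blk map_trmx map_mxM mulmxA.
Qed.

Lemma bform_J01blk_CD n a l : bu (J01blk xs (K n) a) (P2 l) =
  if (l <= n)%N then (jet_blk a (P2 l))^T else 0.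
Proof.
have hbu := bform_mxbilinear hu.
rewrite J01blk_CD (mxform_suml hbu).
under eq_bigr do rewrite (mxformMl hbu).
case: ifP => hl.
  rewrite (bigD1 (Ordinal (hl : l < n.+1)%N)) //= big1 ?addr0.
    by rewrite mulmxKV //; apply: Hnorm_unit.
  by move=> k hk; rewrite bform_P12 ?mulmx0.
rewrite big1 // => k _; rewrite bform_P12 ?mulmx0 //.
by apply: contraFN hl => /eqP <-; rewrite -ltnS.
Qed.

Lemma CD_reproducing_J01 n (Z : 'M[C]_(p, Np)) l :
  bu (cst Z *m J01 xs kappa (K n)) (P2 l) =
  if (l <= n)%N then Z *m (jet xs kappa (P2 l))^T else 0.
Proof.
have hbu := bform_mxbilinear hu.
rewrite /J01 -[Z]submxrowK map_mxrow mul_mxrow_mxcol (mxform_suml hbu).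
under eq_bigr do rewrite (mxformMl hbu) bform_J01blk_CD.
case: ifP => hl; last by rewrite big1 // => a _; rewrite mulmx0.
by rewrite jetE tr_mxrow mul_mxrow_mxcol.
Qed.

Lemma mxsize_J01_CD n (Z : 'M[C]_(p, Np)) : mxsize_le n.+1 (cst Z *m J01 xs kappa (K n)).
Proof.
rewrite /J01 -[Z]submxrowK map_mxrow mul_mxrow_mxcol.
apply: mxsize_le_sum => a; apply: mxsize_le_cstMl; rewrite J01blk_CD.
apply: mxsize_le_sum => k; apply: mxsize_le_cstMl.
by apply: mxsize_le_leq (mxmonic_size (P1_mxmonic k)); rewrite ltn_ord.
Qed.

Lemma pairR2_CD_tr n b : is_functional_mx b -> (pairR2 (K n) b)^T =
  \sum_(k < n.+1) cst ((Hinv k *m pairR (P1 k) b)^T) *m P2 k.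
Proof.
move=> hb; rewrite CDkernel_polyYX pairR2_sum // raddf_sum /=; apply: eq_bigr => k _.
by rewrite pairR2_polyYX // pairR_cstMl // trmx_mul trmxK map_trmx.
Qed.

Lemma CD_reproducing_pairR2 n k a : (k <= n)%N ->
  bu (P1 k) (pairR2 (K n) (beta_ a))^T = pairR (P1 k) (beta_ a).
Proof.
move=> hk; have hbu := bform_mxbilinear hu.
rewrite pairR2_CD_tr; last exact: hbeta.
rewrite (mxform_sumr hbu); under eq_bigr do rewrite (mxformMr hbu).
rewrite (bigD1 (Ordinal (hk : k < n.+1)%N)) //= big1 ?addr0.
  by rewrite trmxK mulKVmx //; apply: Hnorm_unit.
move=> k' hk'; rewrite bform_P12 ?mul0mx //.
by apply: contra hk' => /eqP e; apply/eqP/val_inj.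
Qed.

Lemma jet_blk_pairR2_CD n a b :
  jet_blk b (pairR2 (K n) (beta_ a))^T = (pairR (J01blk xs (K n) b) (beta_ a))^T.
Proof.
rewrite pairR2_CD_tr; last exact: hbeta.
rewrite jet_blk_sum J01blk_CD pairR_sum; last exact: hbeta.
rewrite raddf_sum /=; apply: eq_bigr => k _.
rewrite jet_blk_cstMl pairR_cstMl; last exact: hbeta.
by rewrite !trmx_mul trmxK mulmxA.
Qed.

Lemma CD_reproducing_pairR2beta n (W : 'M[C]_(Np, p)) k : (k <= n)%N ->
  bu (P1 k) (pairR2beta beta (K n) *m cst W)^T = pairRbeta beta (P1 k) *m W.
Proof.
move=> hk; have hbu := bform_mxbilinear hu.
rewrite pairR2beta_cstMr_tr (mxform_sumr hbu) -[in RHS](trmxK W) -[in RHS](submxrowK W^T).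
rewrite tr_mxrow /pairRbeta mul_mxrow_mxcol; apply: eq_bigr => a _.
by rewrite (mxformMr hbu) CD_reproducing_pairR2.
Qed.

Lemma jet_pairR2beta_CD n (W : 'M[C]_(Np, p)) :
  (jet xs kappa (pairR2beta beta (K n) *m cst W)^T)^T = J01beta (K n) *m W.
Proof.
rewrite pairR2beta_cstMr_tr; apply: trmx_inj.
rewrite trmxK trmx_mul jetE /J01beta tr_mxblock.
rewrite -[in RHS](submxrowK W^T) mul_mxrow_mxblock; apply: eq_mxrow => b.
rewrite jet_blk_sum; apply: eq_bigr => a _.
by rewrite jet_blk_cstMl jet_blk_pairR2_CD.
Qed.

Lemma mxsize_pairR2beta_CD n (W : 'M[C]_(Np, p)) :
  mxsize_le n.+1 (pairR2beta beta (K n) *m cst W)^T.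
Proof.
rewrite pairR2beta_cstMr_tr; apply: mxsize_le_sum => a; apply: mxsize_le_cstMl.
rewrite pairR2_CD_tr; last exact: hbeta.
apply: mxsize_le_sum => k; apply: mxsize_le_cstMl.
by apply: mxsize_le_leq (mxmonic_size (P2_mxmonic k)); rewrite ltn_ord.
Qed.

Local Notation M n := (Mmat xs beta (K n)).

Lemma mulmx_Mmat n m (Z : 'M[C]_(m, Np)) : Z *m M n = Z + Z *m J01beta (K n).
Proof. by rewrite /Mmat mulmxDr mulmx1. Qed.

Lemma Mmat_mulmx n m (W : 'M[C]_(Np, m)) : M n *m W = W + J01beta (K n) *m W.
Proof. by rewrite /Mmat mulmxDl mul1mx. Qed.

Hypothesis qdh : quasidefinite (uhat xs beta u).

Lemma bform_uhat_J01_CD n (Z : 'M[C]_(p, Np)) l : (l <= n)%N ->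
  bform (uhat xs beta u) (cst Z *m J01 xs kappa (K n)) (P2 l) =
  Z *m M n *m (jet xs kappa (P2 l))^T.
Proof.
move=> hl; rewrite bform_uhat CD_reproducing_J01 hl pairRbeta_cstMl_J01.
by rewrite -mulmxDl -mulmx_Mmat.
Qed.

Lemma Mmat_unit n : M n \in unitmx.
Proof.
have hbh := uhat_mxbilinear hu.
apply: (@lker0_unitmx _ p) => [|Z hZ]; first exact: Np_gt0.
have ZJ0 : cst Z *m J01 xs kappa (K n) = 0.
  apply: (mxform_nondegl hbh qdh (mxsize_J01_CD n Z)).
  apply: (mxform_monic_spanr hbh P2_mxmonic) => l hl.
  by rewrite bform_uhat_J01_CD // hZ mul0mx.
have := pairRbeta_cstMl_J01 (K n) Z; rewrite ZJ0 pairRbeta0 => /esym ZJ01.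
by rewrite -hZ mulmx_Mmat ZJ01 addr0.
Qed.

Variables hP1 hP2 : nat -> PM.
Hypothesis bioh : biorthogonal_families (uhat xs beta u) hP1 hP2.

Lemma hP1_formula n : hP1 n.+1 = P1 n.+1 -
  cst (pairRbeta beta (P1 n.+1) *m invmx (M n)) *m J01 xs kappa (K n).
Proof.
have hbh := uhat_mxbilinear hu.
have [hP1m hP2m horth] := biorthogonal_familiesP bioh.
set Z := _ *m invmx (M n).
have ZM : Z *m M n = pairRbeta beta (P1 n.+1) by rewrite mulmxKV // Mmat_unit.
apply/eqP; rewrite eq_sym -subr_eq0; apply/eqP.
apply: (mxform_nondegl hbh qdh (n := n)).
  rewrite addrAC; apply: mxsize_leB; last exact: mxsize_J01_CD.
  exact: mxmonicB (P1_mxmonic _) (hP1m _).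
move=> l hl; rewrite (mxformBl hbh) (biorth_orthr hbh hP2m horth) ?subr0 //.
apply: (mxform_monic_spanr hbh P2_mxmonic) hl => l' hl'.
rewrite (mxformBl hbh) bform_uhat bform_P12 ?add0r; last by rewrite neq_ltn ltnS hl' orbT.
by rewrite bform_uhat_J01_CD // ZM subrr.
Qed.

Lemma hH_formula n : Hnorm (uhat xs beta u) hP1 hP2 n.+1 = Hnorm u P1 P2 n.+1 +
  pairRbeta beta (P1 n.+1) *m invmx (M n) *m (jet xs kappa (P2 n.+1))^T.
Proof.
have hbh := uhat_mxbilinear hu.
have [hP1m hP2m horth] := biorthogonal_familiesP bioh.
rewrite /Hnorm -(biorth_norm_mxmonic hbh hP2m horth (P2_mxmonic _)) hP1_formula.
set Z := _ *m invmx (M n).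
have ZM : pairRbeta beta (P1 n.+1) = Z + Z *m J01beta (K n).
  by rewrite -mulmx_Mmat mulmxKV // Mmat_unit.
rewrite (mxformBl hbh) !bform_uhat CD_reproducing_J01 ltnn pairRbeta_cstMl_J01 ZM.
by rewrite add0r mulmxDl addrA addrK.
Qed.

Lemma hP2_formula n : hP2 n.+1 = P2 n.+1 -
  (pairR2beta beta (K n) *m cst (invmx (M n) *m (jet xs kappa (P2 n.+1))^T))^T.
Proof.
have hbh := uhat_mxbilinear hu.
have [hP1m hP2m horth] := biorthogonal_familiesP bioh.
set W := invmx (M n) *m _.
have MW : M n *m W = (jet xs kappa (P2 n.+1))^T by rewrite mulKVmx // Mmat_unit.
apply/eqP; rewrite eq_sym -subr_eq0; apply/eqP.
apply: (mxform_nondegr hbh qdh (n := n)).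
  rewrite addrAC; apply: mxsize_leB; last exact: mxsize_pairR2beta_CD.
  exact: mxmonicB (P2_mxmonic _) (hP2m _).
move=> l hl; rewrite (mxformBr hbh) (biorth_orthl hbh hP1m horth) ?subr0 //.
apply: (mxform_monic_spanl hbh P1_mxmonic) hl => k hk.
rewrite (mxformBr hbh) bform_uhat bform_P12 ?add0r; last by rewrite neq_ltn ltnS hk.
rewrite bform_uhat CD_reproducing_pairR2beta // jet_pairR2beta_CD.
by rewrite -mulmxDr -Mmat_mulmx MW subrr.
Qed.

End ChristoffelDarboux.
End UvarovPerturbation.

Theorem mainTheorem5 (R : realType) (p : nat) (q : nat) (xs : 'I_q -> R)
  (kappa : 'I_q -> nat) (beta : forall j : 'I_q, 'I_(kappa j) -> functional_mx R p)
  (u : kernel_mx R p)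
  (P1 P2 hP1 hP2 : nat -> 'M[{poly R[i]}]_p) :
  injective xs ->
  (forall j, (0 < kappa j)%N) ->
  (forall j m, is_functional_mx (beta j m)) ->
  is_kernel_mx u ->
  quasidefinite u ->
  quasidefinite (uhat xs beta u) ->
  beta_lin_indep beta ->
  perpR_trivial u (KerR beta) \/ perpL_trivial u (in_ideal xs kappa) ->
  biorthogonal_families u P1 P2 ->
  biorthogonal_families (uhat xs beta u) hP1 hP2 ->
  let K := CDkernel u P1 P2 in
  let H := Hnorm u P1 P2 in
  let hH := Hnorm (uhat xs beta u) hP1 hP2 in
  let M := fun n => Mmat xs beta (K n) in
  (forall n, M n \in unitmx) /\
  (forall n,
     [/\ hP1 n.+1 = P1 n.+1 - map_mx polyC (pairRbeta beta (P1 n.+1) *m invmx (M n))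
                                *m J01 xs kappa (K n),
         (hP2 n.+1)^T = (P2 n.+1)^T - pairR2beta beta (K n)
                                *m map_mx polyC (invmx (M n) *m (jet xs kappa (P2 n.+1))^T)
       & hH n.+1 = H n.+1 + pairRbeta beta (P1 n.+1) *m invmx (M n)
                                *m (jet xs kappa (P2 n.+1))^T]).
Proof.
move=> _ _ hbeta hu qdu qdh _ _ bio bioh K H hH M.
split=> n; first exact: (Mmat_unit hbeta hu qdu bio qdh).
split; first exact: (hP1_formula hbeta hu qdu bio qdh bioh).
  by rewrite (hP2_formula hbeta hu qdu bio qdh bioh) linearB /= trmxK.
exact: (hH_formula hbeta hu qdu bio qdh bioh).
Qed.
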